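(* Let $\Bbbk$ be a field, $R=\Bbbk[x_1,\dots,x_m]$ with the standard $\mathbb Z^m$-grading, $L$ a Noetherian multigraded $R$-module with minimal multihomogeneous free presentation $E\xrightarrow{\Phi}G\to L\to 0$, and $S$ a multihomogeneous basis of $E$. Let $\alpha$ be a generic element of $\Lambda(L)$ and let $\omega$ be a total ordering of $I_\alpha$. Then for all $i$, \[ \dim_\Bbbk H_i(V(\alpha,\phi,\omega)_\bullet)=\begin{cases}\beta(\mathbf M_\alpha) & \text{if } i=|I_\alpha|-r(\mathbf M_\alpha),\\ 0&\text{otherwise.}\end{cases} \]
   Context: For nonempty $A\subseteq S$ let $\deg A\in\mathbb Z^m$ be the componentwise maximum of the multidegrees of the elements of $A$; $\Lambda(L)=\{\deg A:\emptyset\ne A\subseteq S\}$. An element $\alpha\in\Lambda(L)$ is generic if $\{A\subseteq S:\deg A=\alpha\}$ is a closed interval $\{A: I_\alpha\subseteq A\subseteq I^\alpha\}$ of the Boolean lattice of subsets of $S$; set $I(\alpha)=I^\alpha\setminus I_\alpha$. Regard $\Bbbk$ as an $R$-module via $x_i\mapsto 1$, let $W=G\otimes_R\Bbbk$, let $U_S$ be the $\Bbbk$-space with basis $\{e_a:a\in S\}$ identified with $E\otimes_R\Bbbk$ via $e_a=a\otimes1$, and $\phi=\Phi\otimes_R\Bbbk\colon U_S\to W$. For $B\subseteq S$ put $V_B=\phi(\operatorname{span}\{e_a:a\in B\})$. The matroid $\mathbf M_\alpha$ on $I_\alpha$ is the one represented by the composite $\operatorname{span}\{e_a:a\in I_\alpha\}\xrightarrow{\phi}W\to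 W/V_{I(\alpha)}$ (equivalently, the contraction of the restriction of $\mathbf M(\phi)$ to $I^\alpha$ by $I(\alpha)$); its rank is $r(\mathbf M_\alpha)=\dim V_{I^\alpha}-\dim V_{I(\alpha)}$ and its rank function is $r_\alpha(J)=\dim V_{I(\alpha)\cup J}-\dim V_{I(\alpha)}$. Its $\beta$-invariant is $\beta(\mathbf M_\alpha)=(-1)^{r_\alpha(I_\alpha)}\sum_{J\subseteq I_\alpha}(-1)^{|J|}r_\alpha(J)$. Subsets of $I_\alpha$ are identified with increasing sequences with respect to $\omega$. The complex $V(\alpha,\phi,\omega)_\bullet$ has $V(\alpha,\phi,\omega)_i=\bigoplus_{A\subseteq I_\alpha,\ |A|=i}V_{I^\alpha\setminus A}$ for $0\le i\le|I_\alpha|$, and its differential has, for $A\subseteq I_\alpha$ and $c\in I_\alpha\setminus A$, component $V_{I^\alpha\setminus(A\cup\{c\})}\to V_{I^\alpha\setminus A}$ equal to the inclusion times the sign of the permutation sorting $(c,I_\alpha\setminus(A\cup\{c\}))$ into increasing order (other components zero). *)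

From HB Require Import structures.
From mathcomp Require Import all_boot all_order all_algebra.
From mathcomp Require Import mpoly.
Set Implicit Arguments. Unset Strict Implicit. Unset Printing Implicit Defensive.
Import Order.TTheory GRing.Theory Num.Theory.
Local Open Scope ring_scope.

(* The basis S of E is indexed by 'I_s (dE a = multidegree of the a-th basis
   element), the homogeneous basis of G by 'I_g (degrees dG).
   The presentation map Phi is given by its matrix: Phi(e_a) = sum_j Phi a j f_j. *)

Definition mdeg_t (m : nat) := {ffun 'I_m -> int}.

Definition mhomog (k : fieldType) (m : nat) (d : mdeg_t m) (p : {mpoly k[m]}) :=
  forall mon : 'X_{1..m}, mon \in msupp p -> forall i : 'I_m, (mon i)%:Z = d i.

Definition mhomog_map (k : fieldType) (m s g : nat)
  (dE : 'I_s -> mdeg_t m) (dG : 'I_g -> mdeg_t m) (Phi : 'I_s -> 'I_g -> {mpoly k[m]}) :=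
  forall a j, mhomog [ffun i => dE a i - dG j i] (Phi a j).

(* Minimality of E --Phi--> G -> coker Phi -> 0:
   image of Phi lies in mG (m = (x_1,...,x_m)), and ker Phi lies in mE. *)
Definition minimal_pres (k : fieldType) (m s g : nat)
  (Phi : 'I_s -> 'I_g -> {mpoly k[m]}) :=
  (forall a j, (Phi a j)@_(0%MM) = 0) /\
  (forall c : 'I_s -> {mpoly k[m]},
      (forall j, \sum_(a < s) c a * Phi a j = 0) -> forall a, (c a)@_(0%MM) = 0).

Definition degS (m s : nat) (dE : 'I_s -> mdeg_t m) (A : {set 'I_s}) : mdeg_t m :=
  [ffun i => match [pick a in A] with
             | Some a0 => \big[Num.max/dE a0 i]_(a in A) dE a i
             | None => 0
             end].

Definition in_Lambda (m s : nat) (dE : 'I_s -> mdeg_t m) (alpha : mdeg_t m) :=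
  exists A : {set 'I_s}, A != set0 /\ degS dE A = alpha.

(* alpha is generic, with {A : deg A = alpha} = [Ilo, Ihi] *)
Definition generic_interval (m s : nat) (dE : 'I_s -> mdeg_t m) (alpha : mdeg_t m)
  (Ilo Ihi : {set 'I_s}) :=
  in_Lambda dE alpha /\
  [set A : {set 'I_s} | (A != set0) && (degS dE A == alpha)]
    = [set A : {set 'I_s} | (Ilo \subset A) && (A \subset Ihi)].

(* phi = Phi (x) k, where k is an R-module via x_i |-> 1: the matrix over k. *)
Definition phi_of (k : fieldType) (m s g : nat) (Phi : 'I_s -> 'I_g -> {mpoly k[m]})
  : 'M[k]_(s, g) := \matrix_(a < s, j < g) (Phi a j).@[fun _ => 1].

(* V_B = phi(span{e_a : a in B}) = span of the rows of phi indexed by B *)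
Definition VB (k : fieldType) (s g : nat) (phi : 'M[k]_(s, g)) (B : {set 'I_s})
  : {vspace 'rV[k]_g} := (\sum_(a in B) <[row a phi]>)%VS.

(* rank function of M_alpha, and its rank, Idiff = I(alpha) = Ihi \ Ilo *)
Definition rk_alpha (k : fieldType) (s g : nat) (phi : 'M[k]_(s, g))
  (Ilo Ihi J : {set 'I_s}) : int :=
  (\dim (VB phi ((Ihi :\: Ilo) :|: J)))%:Z - (\dim (VB phi (Ihi :\: Ilo)))%:Z.

Definition rank_Malpha (k : fieldType) (s g : nat) (phi : 'M[k]_(s, g))
  (Ilo Ihi : {set 'I_s}) : nat :=
  (\dim (VB phi Ihi) - \dim (VB phi (Ihi :\: Ilo)))%N.

Definition beta_Malpha (k : fieldType) (s g : nat) (phi : 'M[k]_(s, g))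
  (Ilo Ihi : {set 'I_s}) : int :=
  (-1) ^+ `|rk_alpha phi Ilo Ihi Ilo|%N *
  \sum_(J : {set 'I_s} | J \subset Ilo) (-1) ^+ #|J| * rk_alpha phi Ilo Ihi J.

(* The complex V(alpha, phi, omega), realised inside the ambient space
   Amb = {ffun {set 'I_s} -> W}: the summand V_{Ihi \ A} (A subset of Ilo)
   sits in the A-coordinate. *)
Definition Amb (k : fieldType) (s g : nat) := {ffun {set 'I_s} -> 'rV[k]_g}.

Definition injA (k : fieldType) (s g : nat) (A : {set 'I_s}) : 'Hom('rV[k]_g, Amb k s g) :=
  linfun (fun v : 'rV[k]_g => [ffun B : {set 'I_s} => if B == A then v else 0] : Amb k s g).

Definition Vcx (k : fieldType) (s g : nat) (phi : 'M[k]_(s, g))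
  (Ilo Ihi : {set 'I_s}) (i : nat) : {vspace Amb k s g} :=
  (\sum_(A : {set 'I_s} | (A \subset Ilo) && (#|A| == i)) (@injA k s g A @: VB phi (Ihi :\: A)))%VS.

(* sign of the permutation sorting (c, Ilo \ (A u {c})) increasingly w.r.t. omega,
   i.e. (-1)^(number of inversions) = (-1)^#{b in Ilo \ (A u {c}) | b <_omega c}.
   The total order omega on Ilo is given by an injective rank map omega. *)
Definition sgn_cx (k : fieldType) (s : nat) (omega : 'I_s -> nat)
  (Ilo A : {set 'I_s}) (c : 'I_s) : k :=
  (-1) ^+ #|[set b in Ilo :\: (c |: A) | (omega b < omega c)%N]|.

(* The differential (of degree -1) on the ambient space: the component
   V_{Ihi \ (A u {c})} -> V_{Ihi \ A} is inclusion times the sign. *)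
Definition dcx_fun (k : fieldType) (s g : nat) (omega : 'I_s -> nat) (Ilo : {set 'I_s})
  (f : Amb k s g) : Amb k s g :=
  [ffun A : {set 'I_s} => if A \subset Ilo then
     \sum_(c in Ilo :\: A) sgn_cx k omega Ilo A c *: f (c |: A) else 0].

Definition dcx (k : fieldType) (s g : nat) (omega : 'I_s -> nat) (Ilo : {set 'I_s})
  : 'End(Amb k s g) := linfun (@dcx_fun k s g omega Ilo).

Definition dimH (k : fieldType) (s g : nat) (phi : 'M[k]_(s, g)) (omega : 'I_s -> nat)
  (Ilo Ihi : {set 'I_s}) (i : nat) : nat :=
  (\dim (Vcx phi Ilo Ihi i :&: lker (@dcx k s g omega Ilo))
   - \dim (@dcx k s g omega Ilo @: Vcx phi Ilo Ihi i.+1))%N.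

(* V(alpha, phi, omega) is the instance F = set0, U = I_alpha of a complex C(F, U)
   attached to any Boolean interval [F, U] of subsets of I^alpha: in degree i it is the
   direct sum of the spaces V_{I^alpha \ A} over F <= A <= U with |A| = i.  Writing
   rk(F, U) = dim V_{I^alpha \ F} - dim V_{I^alpha \ U}, C(F, U) is exact outside degree
   |U| - rk(F, U).  This goes by induction on |U \ F| through deletion-contraction of some
   e in U \ F: if row e lies in V_{I^alpha \ U}, inserting e is a contracting homotopy;
   if it is outside V_{I^alpha \ (F + e)}, projecting onto its line splits the complex into
   a contractible part and a Boolean complex with coefficients in that line; otherwise the
   sets containing e form a subcomplex isomorphic to C(F + e, U) with quotient C(F, U - e).
   With the homology in a single degree, its dimension is, up to sign, the Euler
   characteristic sum_A (-1)^|A| dim V_{I^alpha \ A}; complementing A in I_alpha and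
   dropping the constant term dim V_{I(alpha)}, whose alternating sum over the subsets of
   the nonempty set I_alpha vanishes, turns it into beta(M_alpha). *)

From HB Require Import structures.
From mathcomp Require Import all_boot all_order all_algebra.
From mathcomp Require Import mpoly.
Set Implicit Arguments. Unset Strict Implicit. Unset Printing Implicit Defensive.
Import Order.TTheory GRing.Theory Num.Theory.
Local Open Scope ring_scope.

Lemma cards_predD1 (T : finType) (Y : {set T}) (P : pred T) y : y \in Y ->
  #|[set b in Y | P b]| = (P y + #|[set b in Y :\ y | P b]|)%N.
Proof.
move=> yY; rewrite (cardsD1 y) inE yY; congr (_ + #|pred_of_set _|)%N.
by apply/setP=> b; rewrite !inE; case: eqP.
Qed.

Lemma setDKU (T : finType) (A B : {set T}) : A \subset B -> (B :\: A) :|: A = B.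
Proof.
move=> AB; apply/setP => b; rewrite !inE.
by have [bA|_] := boolP (b \in A); rewrite /= ?orbT ?orbF ?(subsetP AB b bA).
Qed.

Lemma sum_offdiag_antisym (T : finType) (V : zmodType) (X : {set T}) (G : T -> T -> V) :
  {in X &, forall c c', c != c' -> G c' c = - G c c'} ->
  \sum_(c in X) \sum_(c' in X :\ c) G c c' = 0.
Proof.
move=> Ganti; pose r := @enum_rank T.
pose S1 := \sum_c \sum_c' (if [&& c \in X, c' \in X & (r c < r c')%N] then G c c' else 0).
pose S2 := \sum_c \sum_c' (if [&& c \in X, c' \in X & (r c' < r c)%N] then G c c' else 0).
have -> : \sum_(c in X) \sum_(c' in X :\ c) G c c' = S1 + S2.
  rewrite -big_split big_mkcond; apply: eq_bigr => c _ /=.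
  rewrite -big_split /=; case cX: (c \in X); last by rewrite big1 // => c' _; rewrite addr0.
  rewrite big_mkcond; apply: eq_bigr => c' _ /=; rewrite !inE.
  case: (ltngtP (r c) (r c')) => [lt|gt|/val_inj/enum_rank_inj ->];
    rewrite ?eqxx ?andbF ?andbT ?addr0 ?add0r //.
  - by case: eqP => [ec|]; [rewrite ec ltnn in lt | case: (c' \in X)].
  - by case: eqP => [ec|]; [rewrite ec ltnn in gt | case: (c' \in X)].
suff -> : S2 = - S1 by rewrite subrr.
rewrite /S2 exchange_big /S1 -sumrN; apply: eq_bigr => c _.
rewrite -sumrN; apply: eq_bigr => c' _.
case cX: (c \in X); case c'X: (c' \in X); rewrite /= ?oppr0 //.
case: ifP => lt; last by rewrite oppr0.
by rewrite Ganti //; apply: contraTneq lt => ->; rewrite ltnn.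
Qed.

Lemma ffunBE (T : finType) (V : zmodType) (f h : {ffun T -> V}) a : (f - h) a = f a - h a.
Proof. by rewrite !ffunE. Qed.

Lemma linfun_linearE (K : fieldType) (aT rT : vectType K) (f : aT -> rT) :
  linear f -> linfun f =1 f.
Proof.
move=> lin_f; pose fL : {linear aT -> rT} := HB.pack f (GRing.isLinear.Build _ _ _ _ f lin_f).
exact: (lfunE fL).
Qed.

Lemma signr_scaleK (R : pzRingType) (V : lmodType R) n (v : V) :
  (-1) ^+ n *: ((-1) ^+ n *: v) = v.
Proof. by rewrite scalerA -expr2 sqrr_sign scale1r. Qed.

Section Line.
Variables (K : fieldType) (vT : vectType K).

Lemma vline_cap_eq0 (V : {vspace vT}) v : v \notin V -> (<[v]> :&: V = 0)%VS.
Proof.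
move=> vV; apply/eqP; rewrite -subv0; apply/subvP => w /memv_capP [/vlineP [a ->] avV].
rewrite memv0; have [-> | a0] := eqVneq a 0; first by rewrite scale0r.
by case/negP: vV; rewrite -(scalerK a0 v); apply: rpredZ.
Qed.

Lemma dimv_add_line (V : {vspace vT}) v :
  v \notin V -> \dim (V + <[v]>) = (\dim V).+1.
Proof.
move=> vV; rewrite dimv_disjoint_sum; last by rewrite capvC vline_cap_eq0.
rewrite dim_vline.
by case: eqP vV => [->|_]; rewrite ?mem0v ?addn1.
Qed.

End Line.

Section Rows.
Variables (k : fieldType) (s g : nat) (phi : 'M[k]_(s, g)).
Implicit Types X Y : {set 'I_s}.

Lemma VBS X Y : X \subset Y -> (VB phi X <= VB phi Y)%VS.
Proof.
move=> XY; apply/subv_sumP => a aX.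
by apply: (sumv_sup a); [exact: (subsetP XY) | exact: subvv].
Qed.

Lemma row_in_VB X a : a \in X -> row a phi \in VB phi X.
Proof. by move=> aX; apply: (subvP (sumv_sup a aX (subvv _))); apply: memv_line. Qed.

Lemma VB_setU1 X a : VB phi (a |: X) = (VB phi X + <[row a phi]>)%VS.
Proof.
have [aX | aX] := boolP (a \in X); last by rewrite /VB big_setU1 //= addvC.
by rewrite (setUidPr _) ?sub1set //; apply/esym/addv_idPl; rewrite -memvE row_in_VB.
Qed.

Lemma dim_VB_setU_leq X Y : (\dim (VB phi (X :|: Y)) <= \dim (VB phi X) + #|Y|)%N.
Proof.
have sub : (VB phi (X :|: Y) <= VB phi X + VB phi Y)%VS.
  apply/subv_sumP => a; rewrite inE => /orP[aX|aY].
    by apply: subv_trans (addvSl _ _); apply: (sumv_sup a aX); exact: subvv.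
  by apply: subv_trans (addvSr _ _); apply: (sumv_sup a aY); exact: subvv.
apply: leq_trans (dimvS sub) _; apply: leq_trans (dimv_add_leqif _ _) _.
rewrite leq_add2l; apply: leq_trans (dimv_leq_sum _ _ _) _.
by rewrite -sum1_card; apply: leq_sum => a _; rewrite dim_vline; case: (_ != 0).
Qed.

End Rows.

Section Sign.
Variables (k : fieldType) (s : nat) (omega : 'I_s -> nat) (N : {set 'I_s}).
Hypothesis omega_inj : {in N &, injective omega}.
Local Notation sgn := (sgn_cx k omega N).

Lemma sgn_cx_swap (A : {set 'I_s}) c c' : c \in N -> c' \in N -> c != c' -> c \notin A -> c' \notin A ->
  sgn A c * sgn (c |: A) c' = - (sgn A c' * sgn (c' |: A) c).
Proof.
move=> cN c'N cc' cA c'A; rewrite /sgn_cx.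
have c'D : c' \in N :\: (c |: A) by rewrite !inE c'N (negPf c'A) eq_sym (negPf cc').
have cD : c \in N :\: (c' |: A) by rewrite !inE cN (negPf cA) (negPf cc').
rewrite (cards_predD1 _ c'D) (cards_predD1 _ cD) /=.
have DD x y : (N :\: (y |: A)) :\ x = N :\: (x |: (y |: A)).
  by apply/setP=> b; rewrite !inE !negb_or !andbA.
rewrite !DD [c' |: (c |: A)]setUCA.
set a := #|_|; set b := #|_|.
have neq : omega c != omega c'.
  by apply: contra cc' => /eqP/(omega_inj cN c'N)/eqP.
case: ltngtP neq => // _ _ /=; rewrite !exprD expr0 expr1 mul1r mulN1r.
  by rewrite mulNr mulrC.
by rewrite mulNr opprK mulrC.
Qed.

End Sign.

(** * The complex of a Boolean interval *)

Section IntervalComplex.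
Variables (k : fieldType) (s g : nat) (phi : 'M[k]_(s, g)) (omega : 'I_s -> nat).
Variables (N Ihi : {set 'I_s}).
Hypothesis omega_inj : {in N &, injective omega}.

Local Notation W := 'rV[k]_g.
Local Notation Am := (Amb k s g).
Local Notation sgn := (sgn_cx k omega N).
Local Notation V A := (VB phi (Ihi :\: A)).
Implicit Types (F U A B : {set 'I_s}) (e c : 'I_s) (i : nat) (x y f : Am).

Definition between F U A := (F \subset A) && (A \subset U).

(* Whatever the interval [F, U], the signs are those of V(alpha, phi, omega),
   computed relative to the fixed set N. *)
Definition idiff F U x : Am :=
  [ffun A => if between F U A then \sum_(c in U :\: A) sgn A c *: x (c |: A) else 0].

Lemma idiff_is_linear F U : linear (idiff F U).
Proof.
move=> a x y; apply/ffunP=> A; rewrite !ffunE; case: ifP => _; last by rewrite scaler0 addr0.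
rewrite scaler_sumr -big_split /=; apply: eq_bigr => c _.
by rewrite !ffunE scalerDr !scalerA mulrC.
Qed.

HB.instance Definition _ F U :=
  GRing.isLinear.Build k Am Am *:%R (idiff F U) (idiff_is_linear F U).

Definition coefmap (h : 'End(W)) x : Am := [ffun A => h (x A)].

Lemma idiff_coefmap F U h x : idiff F U (coefmap h x) = coefmap h (idiff F U x).
Proof.
apply/ffunP=> A; rewrite !ffunE; case: ifP => _; last by rewrite linear0.
by rewrite linear_sum; apply: eq_bigr => c _; rewrite ffunE linearZ.
Qed.

Definition ichain_coef F U i A : {vspace W} :=
  if between F U A && (#|A| == i) then V A else 0%VS.

Definition ichains F U i : {vspace Am} :=
  (\sum_(A | between F U A && (#|A| == i)) (@injA k s g A @: V A))%VS.

Lemma injAE A (v : W) : @injA k s g A v = [ffun B => if B == A then v else 0] :> Am.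
Proof.
rewrite linfun_linearE // => a u w; apply/ffunP=> B; rewrite !ffunE.
by case: ifP => _; rewrite ?scaler0 ?addr0.
Qed.

Lemma mem_ichains F U i x : x \in ichains F U i <-> forall A, x A \in ichain_coef F U i A.
Proof.
rewrite /ichain_coef; split.
  move/memv_sumP=> [xs xsP ->] B; rewrite sum_ffunE; case: ifP => PB.
    apply: rpred_sum => A PA; have /memv_imgP[u Vu ->] := xsP A PA.
    by rewrite injAE ffunE; case: eqP => [->|_]; [exact: Vu | exact: rpred0].
  rewrite big1 ?mem0v // => A PA; have /memv_imgP[u _ ->] := xsP A PA.
  by rewrite injAE ffunE; case: eqP => // eBA; rewrite eBA PA in PB.
move=> xP; have -> : x = \sum_(A | between F U A && (#|A| == i)) @injA k s g A (x A).
  apply/ffunP=> B; rewrite sum_ffunE; under eq_bigr => A _ do rewrite injAE ffunE.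
  case PB: (between F U B && (#|B| == i)).
    rewrite (bigD1 B) //= eqxx big1 ?addr0 // => A /andP[_ /negPf].
    by rewrite eq_sym => ->.
  rewrite big1; last by move=> A PA; case: eqP => // eBA; rewrite eBA PA in PB.
  by have := xP B; rewrite PB memv0 => /eqP.
by apply: memv_sumr => A PA; apply: memv_img; have := xP A; rewrite PA.
Qed.

Lemma ichains_coef F U i x A : x \in ichains F U i -> x A \in V A.
Proof.
move/mem_ichains/(_ A); rewrite /ichain_coef; case: ifP => // _.
by rewrite memv0 => /eqP ->; exact: mem0v.
Qed.

Lemma ichains_supp F U i x A :
  x \in ichains F U i -> ~~ (between F U A && (#|A| == i)) -> x A = 0.
Proof. by move/mem_ichains/(_ A) => + /negPf PA; rewrite /ichain_coef PA memv0 => /eqP. Qed.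

Lemma ichainsS F F' U U' i :
  F \subset F' -> U' \subset U -> (ichains F' U' i <= ichains F U i)%VS.
Proof.
move=> FF' U'U; apply/subvP=> x /mem_ichains xP; apply/mem_ichains=> A.
move: (xP A); rewrite /ichain_coef /between.
case: ifP => [/andP[/andP[F'A AU'] ->]|_]; last by rewrite memv0 => /eqP ->; exact: mem0v.
by rewrite (subset_trans FF' F'A) (subset_trans AU' U'U).
Qed.

Lemma between_setU1 F U A c : between F U A -> c \in U -> between F U (c |: A).
Proof.
case/andP=> FA AU cU; apply/andP; split; first exact: subset_trans FA (subsetUr _ _).
by rewrite subUset sub1set cU.
Qed.

Lemma between_setD1 F U A e : e \notin F -> between F U A -> between F U (A :\ e).
Proof.
move=> eF /andP[FA AU]; apply/andP; split; last exact: subset_trans (subsetDl _ _) AU.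
by rewrite subsetD1 FA.
Qed.

Lemma idiff_ichains F U i x : x \in ichains F U i.+1 -> idiff F U x \in ichains F U i.
Proof.
move=> xC; apply/mem_ichains => A; rewrite ffunE /ichain_coef.
case: (between F U A) => /=; last exact: mem0v.
case: eqP => [cardA | cardA]; last first.
  rewrite big1 ?mem0v // => c; rewrite inE => /andP[cA _].
  by rewrite (ichains_supp xC) ?scaler0 // cardsU1 cA add1n eqSS (introF eqP cardA) andbF.
apply: rpred_sum => c _; apply: rpredZ.
exact: subvP (VBS _ (setDS _ (subsetUr _ _))) _ (ichains_coef _ xC).
Qed.

Lemma idiff_ichains0 F U x : x \in ichains F U 0 -> idiff F U x = 0.
Proof.
move=> xC; apply/ffunP=> A; rewrite !ffunE; case: ifP => // _.
rewrite big1 // => c _; rewrite (ichains_supp xC) ?scaler0 //.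
by rewrite cards_eq0; apply/nandP; right; apply/set0Pn; exists c; rewrite setU11.
Qed.

Lemma idiffK F U x : U \subset N -> idiff F U (idiff F U x) = 0.
Proof.
move=> UN; apply/ffunP=> A; rewrite !ffunE; case: ifP => // bA.
under eq_bigr => c cUA.
  rewrite ffunE between_setU1 //; last by case/setDP: cUA.
  rewrite scaler_sumr.
  have -> : U :\: (c |: A) = (U :\: A) :\ c.
    by apply/setP=> b; rewrite !inE negb_or andbA.
  under eq_bigr => c' _ do rewrite scalerA.
over.
apply: sum_offdiag_antisym => c c'; rewrite !inE => /andP[cA cU] /andP[c'A c'U] cc'.
rewrite setUCA sgn_cx_swap ?scaleNr ?(subsetP UN) //.
by rewrite eq_sym.
Qed.

Definition iins F U e x : Am :=
  [ffun B : {set 'I_s} => if (e \in B) && between F U B then sgn (B :\ e) e *: x (B :\ e) else 0].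

Lemma idiff_iins F U e x A :
  e \notin A -> e \in U -> between F U A -> idiff F U (iins F U e x) A = x A.
Proof.
move=> eA eU bA; rewrite ffunE bA (bigD1 e) /=; last by rewrite inE eA.
rewrite big1 ?addr0; last first.
  move=> c /andP[_ ce]; rewrite ffunE !inE eq_sym (negPf ce) (negPf eA) /=.
  by rewrite scaler0.
by rewrite ffunE setU11 between_setU1 //= setU1K // signr_scaleK.
Qed.

Lemma iins_ichains F U i e x : e \notin F -> x \in ichains F U i ->
  (forall B, e \in B -> between F U B -> x (B :\ e) \in V B) ->
  iins F U e x \in ichains F U i.+1.
Proof.
move=> eF xC xV; apply/mem_ichains => B; rewrite ffunE /ichain_coef.
case: ifP => [/andP[eB bB]|_]; last by case: ifP; rewrite ?mem0v.
rewrite bB /=; case: eqP => [_|cardB]; first by apply: rpredZ; apply: xV.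
rewrite (ichains_supp xC) ?scaler0 ?mem0v //; apply/nandP; right.
by apply/eqP => cardBe; apply: cardB; rewrite (cardsD1 e B) eB cardBe.
Qed.

(* Inserting e is a contracting homotopy as soon as it preserves the chain spaces. *)
Lemma ichains_cycle_boundary F U i e x :
  e \in U -> e \notin F -> U \subset N ->
  x \in ichains F U i -> idiff F U x = 0 ->
  (forall B, e \in B -> between F U B -> x (B :\ e) \in V B) ->
  exists2 y, y \in ichains F U i.+1 & x = idiff F U y.
Proof.
move=> eU eF UN xC dx xV; exists (iins F U e x); first exact: iins_ichains.
apply/eqP; rewrite -subr_eq0; apply/eqP; set w := (x - _).
have dw : idiff F U w = 0 by rewrite /w linearB /= dx idiffK // subrr.
have w0 A : ~~ between F U A -> w A = 0.
  by move=> bA; rewrite ffunBE ffunE (negPf bA) (ichains_supp xC) ?(negPf bA) ?subrr.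
have w_out A : e \notin A -> w A = 0.
  move=> eA; have [bA|/w0 //] := boolP (between F U A).
  by rewrite ffunBE idiff_iins // subrr.
apply/ffunP=> A; rewrite [RHS]ffunE; have [eA|/w_out //] := boolP (e \in A).
have [bA|/w0 //] := boolP (between F U A).
have := congr1 (fun f : Am => f (A :\ e)) dw; rewrite ffunE between_setD1 //.
rewrite (bigD1 e) /=; last by rewrite !inE eqxx eU.
rewrite big1 ?addr0 ?ffunE; last first.
  move=> c /andP[_ ce]; rewrite w_out ?scaler0 //.
  by rewrite !inE negb_or eq_sym ce eqxx.
rewrite setD1K // => /(congr1 (fun v => sgn (A :\ e) e *: v)).
by rewrite signr_scaleK scaler0.
Qed.

Lemma V_setD1 B e : (V (B :\ e) <= V B + <[row e phi]>)%VS.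
Proof.
rewrite -VB_setU1; apply: VBS; apply/subsetP => b; rewrite !inE.
by case: eqP => //= _ /andP[-> ->].
Qed.

Lemma V_setD1_eq B e : e \in Ihi -> e \in B -> V (B :\ e) = (V B + <[row e phi]>)%VS.
Proof.
move=> eI eB; rewrite -VB_setU1; congr VB; apply/setP => b; rewrite !inE.
by case: eqP => [->|] //=; rewrite eI eB.
Qed.

(* For F = set0 and U = I_alpha, irank is r(M_alpha). *)
Definition irank F U := (\dim (V F) - \dim (V U))%N.

Definition iexact F U := forall i, (i + irank F U != #|U|)%N ->
  forall x, x \in ichains F U i -> idiff F U x = 0 ->
  exists2 y, y \in ichains F U i.+1 & x = idiff F U y.

Lemma iexact_point F : iexact F F.
Proof.
move=> i; rewrite /irank subnn addn0 => iF x xC _; exists 0; first exact: mem0v.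
rewrite linear0; apply/ffunP => A; rewrite ffunE (ichains_supp xC) //.
apply: contra iF => /andP[/andP[FA AF] /eqP <-].
by have -> : A = F by apply/eqP; rewrite eqEsubset AF FA.
Qed.

Lemma iexact_loop F U e : e \in U -> e \notin F -> U \subset N ->
  row e phi \in V U -> iexact F U.
Proof.
move=> eU eF UN eVU i _ x xC dx; apply: (ichains_cycle_boundary eU eF UN xC dx).
move=> B eB /andP[_ BU].
have sub : (V B + <[row e phi]> <= V B)%VS.
  by rewrite subv_add subvv -memvE (subvP (VBS _ (setDS _ BU))).
exact: subvP (subv_trans (V_setD1 B e) sub) _ (ichains_coef _ xC).
Qed.

Lemma idiff_setU1l F U e x A : e \in A -> idiff (e |: F) U x A = idiff F U x A.
Proof. by move=> eA; rewrite !ffunE /between subUset sub1set eA. Qed.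

Lemma idiff_setD1r F U e x : (forall A, e \in A -> x A = 0) ->
  idiff F (U :\ e) x = idiff F U x.
Proof.
move=> xe; apply/ffunP=> A; rewrite !ffunE /between subsetD1.
have [eA|eA] /= := boolP (e \in A); rewrite ?andbF ?andbT.
  by case: ifP => // _; rewrite big1 // => c _; rewrite xe ?scaler0 // inE eA orbT.
case: ifP => // _; have [eU|eU] := boolP (e \in U).
  rewrite [in RHS](bigD1 e) /=; last by rewrite inE eA.
  rewrite xe ?setU11 // scaler0 add0r; apply: eq_bigl => c; rewrite !inE.
  by case: (c \in A); case: (c == e); case: (c \in U).
apply: eq_bigl => c; rewrite !inE; case: eqP => [->|] //=; by rewrite (negPf eU) andbF.
Qed.

Definition restrict e x : Am := [ffun A : {set 'I_s} => if e \in A then x A else 0].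

Lemma restrict_ichains F U i e x :
  x \in ichains F U i -> restrict e x \in ichains (e |: F) U i.
Proof.
move=> xC; apply/mem_ichains => A; rewrite ffunE /ichain_coef /between subUset sub1set.
by case: ifP => eA; [move/mem_ichains: xC => /(_ A) | exact: mem0v].
Qed.

Lemma idiff_restrict F U e x :
  idiff F U x = 0 -> idiff (e |: F) U (restrict e x) = 0.
Proof.
move=> dx; apply/ffunP => A; rewrite [RHS]ffunE; have [eA|eA] := boolP (e \in A).
  rewrite idiff_setU1l //; apply: etrans (_ : _ = idiff F U x A) _; last by rewrite dx ffunE.
  by rewrite !ffunE; case: ifP => // _; apply: eq_bigr => c _; rewrite ffunE inE eA orbT.
by rewrite ffunE /between subUset sub1set (negPf eA).
Qed.

Lemma ichains_setD1r F U i e x : x \in ichains F U i ->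
  (forall A, e \in A -> x A = 0) -> x \in ichains F (U :\ e) i.
Proof.
move=> xC xe; apply/mem_ichains => A; have [eA|eA] := boolP (e \in A).
  by rewrite xe ?mem0v.
by move/mem_ichains: xC => /(_ A); rewrite /ichain_coef /between subsetD1 eA andbT.
Qed.

(* The sets containing e span a subcomplex isomorphic to the complex of [e |: F, U];
   the quotient is the complex of [F, U :\ e]. *)
Lemma iexact_split F U e : e \in U -> e \notin F -> U \subset N ->
  irank (e |: F) U = irank F U -> (irank F (U :\ e)).+1 = irank F U ->
  iexact (e |: F) U -> iexact F (U :\ e) -> iexact F U.
Proof.
move=> eU eF UN rkF rkU exF exU i hi x xC dx.
have hiF : (i + irank (e |: F) U != #|U|)%N by rewrite rkF.
have [y1 y1C eE] := exF i hiF _ (restrict_ichains e xC) (idiff_restrict e dx).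
have y1C' := subvP (ichainsS _ (subsetUr _ _) (subxx _)) _ y1C.
pose x' := x - idiff F U y1.
have x'e A : e \in A -> x' A = 0.
  by move=> eA; rewrite ffunBE -(idiff_setU1l _ _ _ eA) -eE ffunE eA subrr.
have x'C : x' \in ichains F (U :\ e) i.
  by apply: ichains_setD1r x'e; apply: rpredB xC (idiff_ichains y1C').
have dx' : idiff F (U :\ e) x' = 0.
  by rewrite idiff_setD1r // linearB /= dx idiffK // subrr.
have hi' : (i + irank F (U :\ e) != #|U :\ e|)%N.
  by move: hi; rewrite -rkU (cardsD1 e U) eU addnS add1n eqSS.
have [y2 y2C x'E] := exU i hi' x' x'C dx'.
exists (y1 + y2).
  exact: rpredD y1C' (subvP (ichainsS _ (subxx _) (subD1set _ _)) _ y2C).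
rewrite linearD /= -(@idiff_setD1r F U e y2); first by rewrite -x'E /x' addrC subrK.
by move=> A eA; rewrite (ichains_supp y2C) // /between subsetD1 eA !andbF.
Qed.

Section Coloop.
Variables (F U : {set 'I_s}) (e : 'I_s).
Hypotheses (eU : e \in U) (eF : e \notin F) (FU : F \subset U) (UN : U \subset N).
Hypotheses (eI : e \in Ihi) (coloop : row e phi \notin V (e |: F)).

(* The projection onto the line of row e along V (e |: F) splits every chain into
   a part where inserting e is a homotopy and a part with values on that line. *)
Let pi := daddv_pi <[row e phi]> (V (e |: F)).

Lemma pi_V_eq0 w : w \in V (e |: F) -> pi w = 0.
Proof.
move=> wV; have cap : (V (e |: F) :&: <[row e phi]> = 0)%VS by rewrite capvC vline_cap_eq0.
have := daddv_pi_add (vline_cap_eq0 coloop) (subvP (addvSr _ _) w wV).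
by rewrite (daddv_pi_id cap wV) => /(canRL (addrK w)); rewrite subrr.
Qed.

Lemma pi_in_V B w : e \notin B -> pi w \in V B.
Proof.
move=> eB; have /vlineP[a ->] := memv_pi <[row e phi]> (V (e |: F)) w.
by apply/rpredZ/row_in_VB; rewrite inE eB eI.
Qed.

Lemma V_sub_coloop B : e \in B -> between F U B -> (V B <= V (e |: F))%VS.
Proof. by move=> eB /andP[FB _]; apply/VBS/setDS; rewrite subUset sub1set eB FB. Qed.

Lemma pi_coef_eq0 i x A : x \in ichains F U i -> e \in A -> pi (x A) = 0.
Proof.
move=> xC eA; have [bA|bA] := boolP (between F U A).
  exact/pi_V_eq0/(subvP (V_sub_coloop eA bA))/(ichains_coef _ xC).
by rewrite (ichains_supp xC) ?(negPf bA) ?linear0.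
Qed.

Lemma coefmap_pi_ichains i x : x \in ichains F U i -> coefmap pi x \in ichains F U i.
Proof.
move=> xC; apply/mem_ichains => A; rewrite ffunE /ichain_coef; case: ifP => PA; last first.
  by rewrite (ichains_supp xC) ?PA ?linear0 ?mem0v.
by have [eA|eA] := boolP (e \in A); [rewrite (pi_coef_eq0 xC) ?mem0v | exact: pi_in_V].
Qed.

Lemma idiff_coefmap_pi x : idiff F U x = 0 -> idiff F U (coefmap pi x) = 0.
Proof. by move=> dx; rewrite idiff_coefmap dx; apply/ffunP => A; rewrite !ffunE linear0. Qed.

Lemma coefmap_pi_complement_boundary i x : x \in ichains F U i -> idiff F U x = 0 ->
  exists2 y, y \in ichains F U i.+1 & x - coefmap pi x = idiff F U y.
Proof.
move=> xC dx; apply: (ichains_cycle_boundary eU eF UN).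
- exact/rpredB/coefmap_pi_ichains.
- by rewrite linearB /= dx idiff_coefmap_pi // subrr.
move=> B eB bB; rewrite ffunBE ffunE.
have /memv_addP[w wB [u uv ->]] := subvP (V_setD1 B e) _ (ichains_coef (B :\ e) xC).
rewrite linearD /= pi_V_eq0 ?daddv_pi_id ?vline_cap_eq0 ?add0r ?addrK //.
exact: subvP (V_sub_coloop eB bB) _ wB.
Qed.

Lemma irank_coloop : irank F (e |: F) = 1%N.
Proof.
rewrite /irank -{1}(setU1K eF) V_setD1_eq ?setU11 //.
by rewrite dimv_add_line // subSnn.
Qed.

Lemma coefmap_pi_boundary i x : (i + irank F U != #|U|)%N ->
  x \in ichains F U i -> idiff F U x = 0 ->
  exists2 y, y \in ichains F U i.+1 & coefmap pi x = idiff F U y.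
Proof.
move=> hi xC dx; have pxC := coefmap_pi_ichains xC; have dpx := idiff_coefmap_pi dx.
have [UeF|/subsetPn[e' e'U]] := boolP (U \subset e |: F); last first.
  rewrite !inE negb_or => /andP[e'e e'F].
  apply: (ichains_cycle_boundary e'U e'F UN pxC dpx) => B e'B bB; rewrite ffunE.
  have [eB|eB] := boolP (e \in B); last exact: pi_in_V.
  by rewrite (pi_coef_eq0 xC) ?mem0v // !inE eB eq_sym e'e.
exists 0; first exact: mem0v.
rewrite linear0; apply/ffunP => A; rewrite !ffunE.
have [eA|eA] := boolP (e \in A); first exact: (pi_coef_eq0 xC).
rewrite (ichains_supp xC) ?linear0 //; apply: contra hi => /andP[/andP[FA AU] /eqP <-].
have -> : A = F.
  apply/eqP; rewrite eqEsubset FA andbT; apply/subsetP => b bA.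
  have := subsetP (subset_trans AU UeF) b bA; rewrite !inE.
  by case: eqP => [be|] //=; rewrite -be bA in eA.
have -> : U = e |: F by apply/eqP; rewrite eqEsubset UeF subUset sub1set eU FU.
by rewrite irank_coloop cardsU1 eF addn1.
Qed.

Lemma iexact_coloop : iexact F U.
Proof.
move=> i hi x xC dx.
have [y1 y1C x1E] := coefmap_pi_complement_boundary xC dx.
have [y2 y2C x2E] := coefmap_pi_boundary hi xC dx.
by exists (y1 + y2); [exact: rpredD | rewrite linearD /= -x1E -x2E subrK].
Qed.

End Coloop.

Lemma irank_setU1l F U e : e \in Ihi -> e \notin F ->
  row e phi \in V (e |: F) -> irank (e |: F) U = irank F U.
Proof.
move=> eI eF eV; rewrite /irank -{2}(setU1K eF) V_setD1_eq ?setU11 //.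
by congr (\dim _ - _)%N; apply/esym/addv_idPl; rewrite -memvE.
Qed.

Lemma irank_setD1r F U e : e \in Ihi -> e \in U -> e \notin F -> F \subset U ->
  row e phi \notin V U -> (irank F (U :\ e)).+1 = irank F U.
Proof.
move=> eI eU eF FU eV; have le : (\dim (V (U :\ e)) <= \dim (V F))%N.
  by apply/dimvS/VBS/setDS; rewrite subsetD1 FU.
by move: le; rewrite /irank V_setD1_eq // dimv_add_line // => /subnSK.
Qed.

Lemma iexact_all F U : F \subset U -> U \subset N -> U \subset Ihi -> iexact F U.
Proof.
have [n] := ubnP #|U :\: F|; elim: n F U => // n IH F U ltUF FU UN UI.
have [/eqP|/set0Pn[e]] := eqVneq (U :\: F) set0.
  rewrite setD_eq0 => UF; have -> : U = F by apply/eqP; rewrite eqEsubset UF FU.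
  exact: iexact_point.
rewrite inE => /andP[eF eU]; have eI := subsetP UI e eU.
have [eVU|eVU] := boolP (row e phi \in V U); first exact: (iexact_loop eU eF UN eVU).
have [eVF|eVF] := boolP (row e phi \in V (e |: F)); last exact: (iexact_coloop eU eF FU UN eI eVF).
have ltUeF : (#|U :\: (e |: F)| < n)%N.
  rewrite -ltnS; apply: leq_trans ltUF; rewrite ltnS (cardsD1 e (U :\: F)) inE eF eU /=.
  by rewrite setDDl setUC.
apply: (iexact_split eU eF UN); [exact: irank_setU1l | exact: irank_setD1r | |].
  by apply: IH; rewrite // subUset sub1set eU FU.
apply: IH; rewrite ?setDDl ?subsetD1 ?FU //; exact: subset_trans (subD1set _ _) _.
Qed.

Lemma dim_ichains F U i :
  \dim (ichains F U i) = (\sum_(A | between F U A && (#|A| == i)) \dim (V A))%N.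
Proof.
have dx : directv (ichains F U i).
  apply/directv_sum_independent => xs xsP sum0 A PA.
  have := congr1 (fun f : Am => f A) sum0; rewrite sum_ffunE (bigD1 A) //= big1 ?addr0.
    have /memv_imgP [u _ ->] := xsP A PA.
    by rewrite injAE !ffunE eqxx => u0; apply/ffunP=> B; rewrite !ffunE u0; case: ifP.
  move=> B /andP[PB BA]; have /memv_imgP [w _ ->] := xsP B PB.
  by rewrite injAE ffunE eq_sym (negPf BA).
rewrite (directvP dx) /=; apply: eq_bigr => A _; apply: limg_dim_eq.
apply/eqP; rewrite -subv0; apply/subvP=> u /memv_capP [_]; rewrite memv_ker injAE.
by move=> /eqP /(congr1 (fun f : Am => f A)); rewrite !ffunE eqxx => ->; exact: mem0v.
Qed.

Lemma ichains_eq0 F U i : (#|U| < i)%N -> ichains F U i = 0%VS.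
Proof.
move=> Ui; rewrite /ichains big_pred0 // => A; apply/negbTE/nandP.
have [/andP[_ AU]|] := boolP (between F U A); [right | by left].
by apply: contraTneq Ui => <-; rewrite -leqNgt subset_leq_card.
Qed.

Lemma alt_sum_dim_ichains U :
  \sum_(j < #|U|.+1) (-1) ^+ j * (\dim (ichains set0 U j))%:Z =
  \sum_(A : {set 'I_s} | A \subset U) (-1) ^+ #|A| * (\dim (V A))%:Z.
Proof.
under eq_bigr => j _ do
  rewrite dim_ichains (big_morph Posz PoszD (erefl (Posz 0))) mulr_sumr big_mkcond.
rewrite exchange_big /= [RHS]big_mkcond; apply: eq_bigr => A _.
rewrite /between sub0set /=; case: ifP => AU; last by rewrite big1.
have lt : (#|A| < #|U|.+1)%N by rewrite ltnS subset_leq_card.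
rewrite (bigD1 (Ordinal lt)) //= eqxx big1 ?addr0 // => j; rewrite -val_eqE /= => hj.
by rewrite eq_sym (negPf hj).
Qed.

End IntervalComplex.

(** * Euler characteristic and the beta invariant *)

Lemma alt_sum_telescope (R : pzRingType) (a : nat -> R) n :
  \sum_(j < n) (-1) ^+ j * (a j + a j.+1) = a 0%N - (-1) ^+ n * a n.
Proof.
elim: n => [|n IH]; first by rewrite big_ord0 expr0 mul1r subrr.
by rewrite big_ord_recr /= IH exprS mulrDr addrA subrK mulN1r mulNr opprK.
Qed.

Section EulerCharacteristic.
Variables (K : fieldType) (vT : vectType K) (D : 'End(vT)) (C : nat -> {vspace vT}).
Hypothesis D_C : forall j, (D @: C j.+1 <= C j :&: lker D)%VS.

Lemma homology_dim_eq0 j : (C j :&: lker D <= D @: C j.+1)%VS ->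
  (\dim (C j :&: lker D) - \dim (D @: C j.+1) = 0)%N.
Proof. by move/dimvS; rewrite -subn_eq0 => /eqP. Qed.

Lemma alt_sum_dimv_single_homology n i0 :
  (C 0 <= lker D)%VS -> C n.+1 = 0%VS -> (i0 <= n)%N ->
  (forall j, j != i0 -> (C j :&: lker D <= D @: C j.+1)%VS) ->
  \sum_(j < n.+1) (-1) ^+ j * (\dim (C j))%:Z =
  (-1) ^+ i0 * (\dim (C i0 :&: lker D) - \dim (D @: C i0.+1))%N%:Z.
Proof.
move=> C0 Cn i0n exactC; pose im j := (\dim (D @: C j))%:Z.
have dimC j : (\dim (C j))%:Z = (\dim (C j :&: lker D) - \dim (D @: C j.+1))%N%:Z + (im j + im j.+1).
  by rewrite /im addrCA -!PoszD subnK ?(dimvS (D_C j)) // addnC limg_ker_dim.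
under eq_bigr do rewrite dimC mulrDr.
rewrite big_split /= alt_sum_telescope /im Cn limg0 dimv0 mulr0 subr0.
have /eqP -> : (D @: C 0 == 0)%VS by rewrite -lkerE.
rewrite dimv0 addr0 (bigD1 (Ordinal (i0n : (i0 < n.+1)%N))) //= big1 ?addr0 // => j.
by rewrite -val_eqE /= => /exactC/homology_dim_eq0 ->; rewrite mulr0.
Qed.

End EulerCharacteristic.

Lemma sum_sign_subsets_eq0 (R : numDomainType) (T : finType) (X : {set T}) :
  X != set0 -> \sum_(J : {set T} | J \subset X) (-1) ^+ #|J| = 0 :> R.
Proof.
case/set0Pn=> a aX; pose t (J : {set T}) : {set T} := if a \in J then J :\ a else a |: J.
have tK : involutive t.
  move=> J; rewrite /t; have [aJ|aJ] := boolP (a \in J).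
    by rewrite setD11 setD1K.
  by rewrite setU11 setU1K.
have tX J : (t J \subset X) = (J \subset X).
  rewrite /t; case: ifP => aJ; last by rewrite subUset sub1set aX.
  by rewrite subDset (setUidPr _) // sub1set.
set S := \sum_(J | _) _; suff: S *+ 2 = 0 by move/eqP; rewrite mulrn_eq0 => /eqP.
rewrite mulr2n {1}/S (reindex_inj (inv_inj tK)) /= (eq_bigl _ _ tX) -big_split /=.
rewrite big1 // => J _; rewrite /t; case: ifP => aJ.
  by rewrite [in X in _ + X](cardsD1 a J) aJ add1n exprS mulN1r addrN.
by rewrite cardsU1 aJ /= add1n exprS mulN1r addNr.
Qed.

Lemma sum_subsets_setD (T : finType) (V : nmodType) (X : {set T}) (f : {set T} -> V) :
  \sum_(A : {set T} | A \subset X) f A = \sum_(J : {set T} | J \subset X) f (X :\: J).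
Proof.
have XXJ (J : {set T}) : J \subset X -> X :\: (X :\: J) = J.
  by move=> JX; rewrite setDDr setDv set0U; apply/setIidPr.
rewrite (reindex_onto (fun J : {set T} => X :\: J) (fun J => X :\: J)) /=; last exact: XXJ.
apply: eq_bigl => J; rewrite subsetDl /=; apply/eqP/idP => [<-|/XXJ //].
by rewrite setDDr setDv set0U subsetIl.
Qed.

Section Beta.
Variables (k : fieldType) (s g : nat) (phi : 'M[k]_(s, g)) (Ilo Ihi : {set 'I_s}).
Hypotheses (Ilo_neq0 : Ilo != set0) (Ilo_sub : Ilo \subset Ihi).

Lemma rank_Malpha_leq : (rank_Malpha phi Ilo Ihi <= #|Ilo|)%N.
Proof.
rewrite /rank_Malpha leq_subLR; have := dim_VB_setU_leq phi (Ihi :\: Ilo) Ilo.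
by rewrite setDKU.
Qed.

Lemma rk_alpha_top : rk_alpha phi Ilo Ihi Ilo = (rank_Malpha phi Ilo Ihi)%:Z.
Proof.
rewrite /rk_alpha /rank_Malpha setDKU // subzn //.
by apply/dimvS/VBS/subsetDl.
Qed.

Lemma alt_sum_dimV_beta :
  \sum_(A : {set 'I_s} | A \subset Ilo) (-1) ^+ #|A| * (\dim (VB phi (Ihi :\: A)))%:Z =
  (-1) ^+ (#|Ilo| + rank_Malpha phi Ilo Ihi) * beta_Malpha phi Ilo Ihi.
Proof.
rewrite /beta_Malpha rk_alpha_top absz_nat exprD -mulrA signrMK /rk_alpha.
rewrite (eq_bigr _ (fun J _ => mulrBr _ _ _)) sumrB -mulr_suml sum_sign_subsets_eq0 // mul0r subr0.
rewrite sum_subsets_setD mulr_sumr; apply: eq_bigr => J JI.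
rewrite setDDr (setIidPr (subset_trans JI Ilo_sub)) cardsD (setIidPr JI).
by rewrite -[in RHS](subnK (subset_leq_card JI)) exprD -mulrA signrMK.
Qed.

End Beta.

Lemma generic_interval_bounds (m s : nat) (dE : 'I_s -> mdeg_t m) (alpha : mdeg_t m)
  (Ilo Ihi : {set 'I_s}) :
  generic_interval dE alpha Ilo Ihi -> Ilo != set0 /\ Ilo \subset Ihi.
Proof.
case=> [[A0 [A0n A0d]] hI].
have : A0 \in [set A | (A != set0) && (degS dE A == alpha)] by rewrite inE A0n A0d eqxx.
rewrite hI inE => /andP[IA0 A0I]; have IloIhi := subset_trans IA0 A0I.
have : Ilo \in [set A : {set 'I_s} | (Ilo \subset A) && (A \subset Ihi)] by rewrite inE subxx IloIhi.
by rewrite -hI inE => /andP[].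
Qed.

Section Vcx.
Variables (k : fieldType) (s g : nat) (phi : 'M[k]_(s, g)) (omega : 'I_s -> nat).
Variables (Ilo Ihi : {set 'I_s}).
Hypotheses (omega_inj : {in Ilo &, injective omega}) (Ilo_sub : Ilo \subset Ihi).

Local Notation D := (@dcx k s g omega Ilo).
Local Notation C := (Vcx phi Ilo Ihi).

Lemma dcxE x : D x = idiff omega Ilo set0 Ilo x.
Proof.
have dcx_funE f : dcx_fun omega Ilo f = idiff omega Ilo set0 Ilo f.
  by apply/ffunP => A; rewrite !ffunE /between sub0set.
by rewrite /dcx linfun_linearE ?dcx_funE // => a f h; rewrite !dcx_funE linearP.
Qed.

Lemma Vcx_ichains j : C j = ichains phi Ihi set0 Ilo j.
Proof. by apply: eq_bigl => A; rewrite /between sub0set. Qed.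

Lemma Vcx_complex j : (D @: C j.+1 <= C j :&: lker D)%VS.
Proof.
apply/subvP => w /memv_imgP [u]; rewrite !Vcx_ichains => uC ->.
by rewrite memv_cap memv_ker !dcxE idiff_ichains //= idiffK.
Qed.

Lemma Vcx0_ker : (C 0 <= lker D)%VS.
Proof. by apply/subvP => u; rewrite memv_ker dcxE Vcx_ichains => /idiff_ichains0 ->. Qed.

Lemma Vcx_eq0 j : (#|Ilo| < j)%N -> C j = 0%VS.
Proof. by rewrite Vcx_ichains; apply: ichains_eq0. Qed.

Lemma Vcx_exact j : (j + rank_Malpha phi Ilo Ihi != #|Ilo|)%N ->
  (C j :&: lker D <= D @: C j.+1)%VS.
Proof.
move=> hj; apply/subvP => w /memv_capP [wC]; rewrite memv_ker dcxE => /eqP dw.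
rewrite Vcx_ichains in wC; have hj' : (j + irank phi Ihi set0 Ilo != #|Ilo|)%N.
  by rewrite /irank setD0.
have [y yC ->] := iexact_all omega_inj (sub0set Ilo) (subxx Ilo) Ilo_sub hj' wC dw.
by rewrite -dcxE memv_img // Vcx_ichains.
Qed.

End Vcx.

Theorem corollary4p6 (k : fieldType) (m s g : nat)
  (dE : 'I_s -> mdeg_t m) (dG : 'I_g -> mdeg_t m)
  (Phi : 'I_s -> 'I_g -> {mpoly k[m]})
  (hPhi : mhomog_map dE dG Phi) (hmin : minimal_pres Phi)
  (alpha : mdeg_t m) (Ilo Ihi : {set 'I_s})
  (hgen : generic_interval dE alpha Ilo Ihi)
  (omega : 'I_s -> nat) (homega : {in Ilo &, injective omega}) :
  forall i : nat,
    (dimH (phi_of Phi) omega Ilo Ihi i)%:Z =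
    (if i == (#|Ilo| - rank_Malpha (phi_of Phi) Ilo Ihi)%N
     then beta_Malpha (phi_of Phi) Ilo Ihi else 0).
Proof.
move=> i; set phi := phi_of Phi; set n := #|Ilo|; set r := rank_Malpha phi Ilo Ihi.
have [Ilo_neq0 Ilo_sub] := generic_interval_bounds hgen.
have exact_off j : j != (n - r)%N ->
    (Vcx phi Ilo Ihi j :&: lker (@dcx k s g omega Ilo) <= @dcx k s g omega Ilo @: Vcx phi Ilo Ihi j.+1)%VS.
  move=> ne; apply: Vcx_exact => //; apply: contra ne => /eqP hj.
  by rewrite /n -hj addnK.
rewrite /dimH; case: eqP => [->|/eqP ne]; last by rewrite homology_dim_eq0 ?exact_off.
have r_le : (r <= n)%N := rank_Malpha_leq phi Ilo_sub.
have := alt_sum_dimv_single_homology (Vcx_complex phi Ihi homega) (Vcx0_ker phi omega Ilo Ihi)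
  (Vcx_eq0 phi Ihi (ltnSn n)) (leq_subr r n) exact_off.
under eq_bigr do rewrite Vcx_ichains.
rewrite alt_sum_dim_ichains alt_sum_dimV_beta //.
have -> : (-1) ^+ (n + r) = (-1) ^+ (n - r) :> int.
  by rewrite -{1}(subnK r_le) -addnA exprD addnn -mul2n mulnC exprM sqrr_sign mulr1.
by move/(congr1 ( *%R ((-1) ^+ (n - r)))); rewrite !signrMK.
Qed.
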